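(* Let $\mathbb{R}^{3,1}$ denote $\mathbb{R}^4$ with the inner product $\langle\langle X,Y\rangle\rangle = X_1Y_1+X_2Y_2+X_3Y_3-X_4Y_4$. Let $S\colon \mathbb{R}^2\to\mathbb{R}^{3,1}$ be a regular smooth net and let $P$ be an attached tangent isotropic hyperplane congruence of $S$ (definitions in the context). Let $N(u,v)$ be a normal vector (with respect to $\langle\langle\cdot,\cdot\rangle\rangle$) to $P(u,v)$ depending smoothly on $(u,v)$, and set $$L_P:=\langle\langle S_{uu},N\rangle\rangle=-\langle\langle S_u,N_u\rangle\rangle,\quad M_P:=\langle\langle S_{uv},N\rangle\rangle=-\langle\langle S_u,N_v\rangle\rangle=-\langle\langle S_v,N_u\rangle\rangle,\quad N_P:=\langle\langle S_{vv},N\rangle\rangle=-\langle\langle S_v,N_v\rangle\rangle .$$ Then two non-parallel tangent vectors $A=a_1S_u+a_2S_v$ and $B=b_1S_u+b_2S_v$ at a surface point $S(u,v)$ are L-conjugate with respect to $P$ if and only if $$L_Pa_1b_1+M_P(a_1b_2+a_2b_1)+N_Pa_2b_2=0 .$$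
   Context: An isotropic hyperplane ($\gamma$-hyperplane) in $\mathbb{R}^{3,1}$ is a hyperplane of the form $\{(x,x_4)\in\mathbb{R}^3\times\mathbb{R}: x_4=\langle n,x\rangle+h\}$ with $n\in\mathbb{R}^3$ a Euclidean unit vector and $h\in\mathbb{R}$; its normal vector $(n,1)$ is isotropic. A regular smooth net is a smooth map $S\colon\mathbb{R}^2\to\mathbb{R}^{3,1}$ with $S_u(u,v)$ not parallel to $S_v(u,v)$ at every $(u,v)$. An attached tangent isotropic hyperplane congruence is a smooth map $P$ assigning to each $(u,v)$ an isotropic hyperplane $P(u,v)$ such that $S(u,v)\in P(u,v)$ and $S_u(u,v),S_v(u,v)$ are parallel to $P(u,v)$. A reparametrization of $(S,P)$ is $(S\circ D,P\circ D)$ for a diffeomorphism $D\colon\mathbb{R}^2\to\mathbb{R}^2$. Two non-parallel tangent vectors $T_1,T_2$ at a surface point $X=S(u,v)$ are called L-conjugate with respect to $P$ if there is a reparametrization $(\bar S,\bar P)$ of $(S,P)$ such that, at the parameter corresponding to $X$, $\bar S_u\parallel T_1$, $\bar S_v\parallel T_2$, and $\bar S_u,\bar S_v,\bar S_{uv}$ are all parallel to the hyperplane $\bar P$. *)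

From Stdlib Require Import Reals List.
From Coquelicot Require Import Coquelicot.
Open Scope R_scope.

Record V4 := mkV4 { c1 : R; c2 : R; c3 : R; c4 : R }.

Definition vadd (X Y : V4) : V4 :=
  mkV4 (c1 X + c1 Y) (c2 X + c2 Y) (c3 X + c3 Y) (c4 X + c4 Y).
Definition vscal (a : R) (X : V4) : V4 :=
  mkV4 (a * c1 X) (a * c2 X) (a * c3 X) (a * c4 X).
Definition v0 : V4 := mkV4 0 0 0 0.

Definition mink (X Y : V4) : R :=
  c1 X * c1 Y + c2 X * c2 Y + c3 X * c3 Y - c4 X * c4 Y.

Definition par (X Y : V4) : Prop :=
  exists c : R, X = vscal c Y \/ Y = vscal c X.

Definition du (f : R -> R -> R) : R -> R -> R :=
  fun u v => Derive (fun t => f t v) u.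
Definition dv (f : R -> R -> R) : R -> R -> R :=
  fun u v => Derive (fun t => f u t) v.

Fixpoint iterD (w : list bool) (f : R -> R -> R) : R -> R -> R :=
  match w with
  | nil => f
  | b :: w' => if b then du (iterD w' f) else dv (iterD w' f)
  end.

Definition cont2 (g : R -> R -> R) : Prop :=
  forall u v eps, 0 < eps -> exists del, 0 < del /\
    forall u' v', Rabs (u' - u) < del -> Rabs (v' - v) < del ->
      Rabs (g u' v' - g u v) < eps.

Definition smooth2 (f : R -> R -> R) : Prop :=
  forall w : list bool,
    cont2 (iterD w f) /\
    (forall u v, ex_derive (fun t => iterD w f t v) u /\
                 ex_derive (fun t => iterD w f u t) v).

Definition smoothV (F : R -> R -> V4) : Prop :=
  smooth2 (fun u v => c1 (F u v)) /\ smooth2 (fun u v => c2 (F u v)) /\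
  smooth2 (fun u v => c3 (F u v)) /\ smooth2 (fun u v => c4 (F u v)).

Definition dU (F : R -> R -> V4) : R -> R -> V4 :=
  fun u v => mkV4 (du (fun a b => c1 (F a b)) u v) (du (fun a b => c2 (F a b)) u v)
                  (du (fun a b => c3 (F a b)) u v) (du (fun a b => c4 (F a b)) u v).
Definition dV (F : R -> R -> V4) : R -> R -> V4 :=
  fun u v => mkV4 (dv (fun a b => c1 (F a b)) u v) (dv (fun a b => c2 (F a b)) u v)
                  (dv (fun a b => c3 (F a b)) u v) (dv (fun a b => c4 (F a b)) u v).

Definition regular_net (S : R -> R -> V4) : Prop :=
  smoothV S /\ forall u v, ~ par (dU S u v) (dV S u v).

(** Isotropic hyperplane {(x,x4) : x4 = <n,x> + h}, n = (n1,n2,n3) a Euclidean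
    unit vector (the unit condition is imposed in [iso_congruence]). *)
Record IsoHyp := mkIsoHyp { hn1 : R; hn2 : R; hn3 : R; hh : R }.

Definition in_hyp (H : IsoHyp) (X : V4) : Prop :=
  c4 X = hn1 H * c1 X + hn2 H * c2 X + hn3 H * c3 X + hh H.

Definition par_hyp (H : IsoHyp) (X : V4) : Prop :=
  c4 X = hn1 H * c1 X + hn2 H * c2 X + hn3 H * c3 X.

Definition iso_congruence (P : R -> R -> IsoHyp) : Prop :=
  smooth2 (fun u v => hn1 (P u v)) /\ smooth2 (fun u v => hn2 (P u v)) /\
  smooth2 (fun u v => hn3 (P u v)) /\ smooth2 (fun u v => hh (P u v)) /\
  forall u v, hn1 (P u v) ^ 2 + hn2 (P u v) ^ 2 + hn3 (P u v) ^ 2 = 1.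

Definition tangent_congruence (S : R -> R -> V4) (P : R -> R -> IsoHyp) : Prop :=
  iso_congruence P /\
  forall u v, in_hyp (P u v) (S u v) /\ par_hyp (P u v) (dU S u v) /\
              par_hyp (P u v) (dV S u v).

Definition normal_to (H : IsoHyp) (N : V4) : Prop :=
  N <> v0 /\ forall X, par_hyp H X -> mink X N = 0.

Definition diffeo2 (D1 D2 : R -> R -> R) : Prop :=
  smooth2 D1 /\ smooth2 D2 /\
  exists E1 E2 : R -> R -> R, smooth2 E1 /\ smooth2 E2 /\
    (forall u v, D1 (E1 u v) (E2 u v) = u /\ D2 (E1 u v) (E2 u v) = v) /\
    (forall u v, E1 (D1 u v) (D2 u v) = u /\ E2 (D1 u v) (D2 u v) = v).

Definition L_conjugate (S : R -> R -> V4) (P : R -> R -> IsoHyp)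
    (u v : R) (T1 T2 : V4) : Prop :=
  exists D1 D2 : R -> R -> R, diffeo2 D1 D2 /\
    let Sb := fun a b => S (D1 a b) (D2 a b) in
    let Pb := fun a b => P (D1 a b) (D2 a b) in
    exists a b, D1 a b = u /\ D2 a b = v /\
      par (dU Sb a b) T1 /\ par (dV Sb a b) T2 /\
      par_hyp (Pb a b) (dU Sb a b) /\ par_hyp (Pb a b) (dV Sb a b) /\
      par_hyp (Pb a b) (dV (dU Sb) a b).

(* Under a change of parameters (D1, D2) the reparametrized net Sb satisfies
   Sb_u = D1_u S_u + D2_u S_v, Sb_v = D1_v S_u + D2_v S_v and
   Sb_uv = (a combination of S_u, S_v) + D1_u D1_v S_uu
           + (D1_u D2_v + D2_u D1_v) S_uv + D2_u D2_v S_vv.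
   As S_u, S_v lie in P and N is normal to P, Sb_uv is parallel to P exactly
   when the form (L_P, M_P, N_P) vanishes on the Jacobian columns
   (D1_u, D2_u) and (D1_v, D2_v).  For a diffeomorphism these columns are
   nonzero, and they are proportional to the coefficients of A and B.
   Conversely the affine change (x, y) |-> (u + a1 x + b1 y, v + a2 x + b2 y),
   invertible since A and B are independent, has Jacobian columns (a1, a2)
   and (b1, b2). *)

From Stdlib Require Import Reals Lra List FunctionalExtensionality.
From Coquelicot Require Import Coquelicot.
Open Scope R_scope.

Lemma iterD_cat w w' f : iterD (w ++ w') f = iterD w (iterD w' f).
Proof. induction w as [|b w IH]; simpl; [reflexivity | now rewrite IH]. Qed.

Lemma smooth2_du f : smooth2 f -> smooth2 (du f).
Proof. intros Hf w. rewrite <- (iterD_cat w (true :: nil)). apply Hf. Qed.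

Lemma smooth2_dv f : smooth2 f -> smooth2 (dv f).
Proof. intros Hf w. rewrite <- (iterD_cat w (false :: nil)). apply Hf. Qed.

Lemma smooth2_partials f :
  cont2 f ->
  (forall u v, ex_derive (fun t => f t v) u /\ ex_derive (fun t => f u t) v) ->
  smooth2 (du f) -> smooth2 (dv f) -> smooth2 f.
Proof.
  intros Hc Hd Hu Hv w. destruct w as [|b w _] using rev_ind.
  - now split.
  - rewrite iterD_cat. destruct b; simpl; [apply Hu | apply Hv].
Qed.

Lemma cont2_continuity_2d_pt g : cont2 g <-> forall u v, continuity_2d_pt g u v.
Proof.
  split.
  - intros Hg u v eps. destruct (Hg u v eps (cond_pos eps)) as [d [Hd0 Hd]].
    exists (mkposreal d Hd0). intros; now apply Hd.
  - intros Hg u v eps Heps. destruct (Hg u v (mkposreal eps Heps)) as [d Hd].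
    exists d. split; [apply cond_pos | intros; now apply Hd].
Qed.

Lemma iterD_const w c : exists c', iterD w (fun _ _ => c) = fun _ _ => c'.
Proof.
  induction w as [|b w [c' IH]]; simpl.
  - now exists c.
  - exists 0. rewrite IH. apply functional_extensionality; intro x.
    apply functional_extensionality; intro y.
    destruct b; [unfold du | unfold dv]; apply Derive_const.
Qed.

Lemma smooth2_const c : smooth2 (fun _ _ => c).
Proof.
  intro w. destruct (iterD_const w c) as [c' ->]. split.
  - apply cont2_continuity_2d_pt. intros; apply continuity_2d_pt_const.
  - intros; split; apply ex_derive_const.
Qed.

Lemma du_affine c0 c1 c2 : du (fun x y => c0 + c1 * x + c2 * y) = fun _ _ => c1.
Proof.
  do 2 (apply functional_extensionality; intro).
  apply is_derive_unique. auto_derive; auto; ring.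
Qed.

Lemma dv_affine c0 c1 c2 : dv (fun x y => c0 + c1 * x + c2 * y) = fun _ _ => c2.
Proof.
  do 2 (apply functional_extensionality; intro).
  apply is_derive_unique. auto_derive; auto; ring.
Qed.

Lemma smooth2_affine c0 c1 c2 : smooth2 (fun x y => c0 + c1 * x + c2 * y).
Proof.
  apply smooth2_partials.
  - apply cont2_continuity_2d_pt. intros u v.
    apply continuity_2d_pt_plus; [apply continuity_2d_pt_plus |];
      try apply continuity_2d_pt_mult;
      (apply continuity_2d_pt_const || apply continuity_2d_pt_id1
       || apply continuity_2d_pt_id2).
  - intros u v; split; auto_derive; auto.
  - rewrite du_affine. apply smooth2_const.
  - rewrite dv_affine. apply smooth2_const.
Qed.

Lemma is_derive_du f a b : smooth2 f -> is_derive (fun t => f t b) a (du f a b).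
Proof. intros Hf. apply Derive_correct, (proj2 (Hf nil) a b). Qed.

Lemma is_derive_dv f a b : smooth2 f -> is_derive (fun t => f a t) b (dv f a b).
Proof. intros Hf. apply Derive_correct, (proj2 (Hf nil) a b). Qed.

Lemma smooth2_ex_diff_n n : forall f x y, smooth2 f -> ex_diff_n f n x y.
Proof.
  induction n as [|n IH]; intros f x y Hf;
    (split; [apply cont2_continuity_2d_pt, (Hf nil) |]); [exact I |].
  destruct (proj2 (Hf nil) x y) as [Hu Hv].
  repeat split; [exact Hu | exact Hv | |]; apply IH;
    [apply smooth2_du | apply smooth2_dv]; exact Hf.
Qed.

Lemma DL_pol_1 f x y dx dy :
  DL_pol 1 f x y dx dy = f x y + du f x y * dx + dv f x y * dy.
Proof.
  unfold DL_pol, differential, partial_derive, Binomial.C, du, dv. simpl.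
  field.
Qed.

Lemma DL_regular_1_differentiable f x y :
  DL_regular_n f 1 x y -> differentiable_pt_lim f x y (du f x y) (dv f x y).
Proof.
  intros [D [d Hd]] eps.
  set (K := Rabs D + 1).
  assert (HK : 0 < K) by (pose proof (Rabs_pos D); unfold K; lra).
  assert (Hdelta : 0 < Rmin d (eps / K))
    by (apply Rmin_pos; [apply cond_pos | apply Rdiv_lt_0_compat; [apply cond_pos | exact HK]]).
  exists (mkposreal _ Hdelta). simpl. intros u v Hu Hv.
  pose proof (Rmin_l d (eps / K)). pose proof (Rmin_r d (eps / K)).
  specialize (Hd u v ltac:(lra) ltac:(lra)). rewrite DL_pol_1 in Hd.
  set (m := Rmax (Rabs (u - x)) (Rabs (v - y))) in *.
  assert (Hm0 : 0 <= m) by (apply Rle_trans with (Rabs (u - x)); [apply Rabs_pos | apply Rmax_l]).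
  assert (HmK : m * K <= eps).
  { assert (m <= eps / K) by (apply Rmax_lub; lra).
    apply Rmult_le_reg_r with (/ K); [now apply Rinv_0_lt_compat |].
    rewrite Rmult_assoc, Rinv_r by lra. lra. }
  assert (HDK : D <= K) by (pose proof (Rle_abs D); unfold K; lra).
  replace (f u v - f x y - (du f x y * (u - x) + dv f x y * (v - y)))
    with (f u v - (f x y + du f x y * (u - x) + dv f x y * (v - y))) by ring.
  apply Rle_trans with (1 := Hd). simpl. nra.
Qed.

Lemma smooth2_differentiable f x y :
  smooth2 f -> differentiable_pt_lim f x y (du f x y) (dv f x y).
Proof.
  intros Hf. apply DL_regular_1_differentiable, Taylor_Lagrange_2d.
  exists (mkposreal 1 Rlt_0_1). intros; now apply smooth2_ex_diff_n.
Qed.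

Lemma is_derive_comp2 f X Y t lx ly :
  smooth2 f -> is_derive X t lx -> is_derive Y t ly ->
  is_derive (fun s => f (X s) (Y s)) t
    (du f (X t) (Y t) * lx + dv f (X t) (Y t) * ly).
Proof.
  intros Hf HX HY. apply is_derive_Reals, derivable_pt_lim_comp_2d;
    [apply smooth2_differentiable, Hf | apply is_derive_Reals ..]; assumption.
Qed.

Lemma smooth2_du_dv f x y : smooth2 f -> du (dv f) x y = dv (du f) x y.
Proof.
  intros Hf. apply Schwarz.
  - exists (mkposreal 1 Rlt_0_1). intros u v _ _.
    destruct (proj2 (Hf nil) u v) as [Hu Hv].
    destruct (proj2 (smooth2_dv f Hf nil) u v) as [Hvu _].
    destruct (proj2 (smooth2_du f Hf nil) u v) as [_ Huv].
    now repeat split.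
  - apply cont2_continuity_2d_pt, (Hf (true :: false :: nil)).
  - apply cont2_continuity_2d_pt, (Hf (false :: true :: nil)).
Qed.

Section Reparametrization.

Variables f D1 D2 : R -> R -> R.
Hypotheses (Hf : smooth2 f) (HD1 : smooth2 D1) (HD2 : smooth2 D2).

Let g a b := f (D1 a b) (D2 a b).

Lemma du_comp2 a b :
  du g a b = du D1 a b * du f (D1 a b) (D2 a b) + du D2 a b * dv f (D1 a b) (D2 a b).
Proof.
  apply is_derive_unique. rewrite Rmult_comm, (Rmult_comm (du D2 a b)).
  apply (is_derive_comp2 f (fun t => D1 t b) (fun t => D2 t b));
    [exact Hf | apply is_derive_du ..]; assumption.
Qed.

Lemma dv_comp2 a b :
  dv g a b = dv D1 a b * du f (D1 a b) (D2 a b) + dv D2 a b * dv f (D1 a b) (D2 a b).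
Proof.
  apply is_derive_unique. rewrite Rmult_comm, (Rmult_comm (dv D2 a b)).
  apply (is_derive_comp2 f (fun t => D1 a t) (fun t => D2 a t));
    [exact Hf | apply is_derive_dv ..]; assumption.
Qed.

Lemma dv_du_comp2 a b :
  let x := D1 a b in let y := D2 a b in
  dv (du g) a b =
    (dv (du D1) a b * du f x y + dv (du D2) a b * dv f x y)
    + (du D1 a b * dv D1 a b * du (du f) x y
       + (du D1 a b * dv D2 a b + du D2 a b * dv D1 a b) * dv (du f) x y
       + du D2 a b * dv D2 a b * dv (dv f) x y).
Proof.
  intros x y. unfold dv at 1.
  rewrite (Derive_ext _ (fun t => du D1 a t * du f (D1 a t) (D2 a t)
                                  + du D2 a t * dv f (D1 a t) (D2 a t)))
    by (intro; apply du_comp2).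
  assert (Hduf := is_derive_comp2 (du f) (fun t => D1 a t) (fun t => D2 a t) b _ _
                  (smooth2_du f Hf) (is_derive_dv D1 a b HD1) (is_derive_dv D2 a b HD2)).
  assert (Hdvf := is_derive_comp2 (dv f) (fun t => D1 a t) (fun t => D2 a t) b _ _
                  (smooth2_dv f Hf) (is_derive_dv D1 a b HD1) (is_derive_dv D2 a b HD2)).
  assert (Hsum := is_derive_plus _ _ _ _ _
    (is_derive_mult _ _ _ _ _ (is_derive_dv (du D1) a b (smooth2_du D1 HD1)) Hduf Rmult_comm)
    (is_derive_mult _ _ _ _ _ (is_derive_dv (du D2) a b (smooth2_du D2 HD2)) Hdvf Rmult_comm)).
  unfold plus, mult in Hsum; simpl in Hsum.
  rewrite (is_derive_unique _ _ _ Hsum), (smooth2_du_dv f (D1 a b) (D2 a b) Hf).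
  unfold x, y. ring.
Qed.

End Reparametrization.

Lemma mink_vadd_l X Y Z : mink (vadd X Y) Z = mink X Z + mink Y Z.
Proof. unfold mink, vadd; simpl; ring. Qed.

Lemma mink_vscal_l k X Z : mink (vscal k X) Z = k * mink X Z.
Proof. unfold mink, vscal; simpl; ring. Qed.

Lemma par_hyp_lincomb H p q X Y :
  par_hyp H X -> par_hyp H Y -> par_hyp H (vadd (vscal p X) (vscal q Y)).
Proof. unfold par_hyp, vadd, vscal; simpl. intros -> ->. ring. Qed.

Lemma normal_to_par_hyp_iff H N X :
  normal_to H N -> (par_hyp H X <-> mink X N = 0).
Proof.
  destruct H as [n1 n2 n3 h], N as [N1 N2 N3 N4], X as [x1 x2 x3 x4].
  unfold normal_to, par_hyp, mink, v0; simpl. intros [HN0 HN].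
  assert (E1 := HN (mkV4 1 0 0 n1) ltac:(simpl; ring)).
  assert (E2 := HN (mkV4 0 1 0 n2) ltac:(simpl; ring)).
  assert (E3 := HN (mkV4 0 0 1 n3) ltac:(simpl; ring)).
  unfold mink in E1, E2, E3; simpl in E1, E2, E3.
  (* Hence N = N4 (n1, n2, n3, 1), with N4 <> 0 since N <> 0. *)
  replace N1 with (n1 * N4) in * by lra.
  replace N2 with (n2 * N4) in * by lra.
  replace N3 with (n3 * N4) in * by lra.
  assert (HN4 : N4 <> 0) by (intros ->; apply HN0; f_equal; ring).
  split; intros Hx.
  - rewrite Hx. ring.
  - apply (Rmult_eq_reg_l N4); [lra | assumption].
Qed.

Definition par_R2 (p q r s : R) : Prop :=
  exists c, (p = c * r /\ q = c * s) \/ (r = c * p /\ s = c * q).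

Lemma not_par_lin_indep X Y p q :
  ~ par X Y -> vadd (vscal p X) (vscal q Y) = v0 -> p = 0 /\ q = 0.
Proof.
  destruct X as [x1 x2 x3 x4], Y as [y1 y2 y3 y4].
  unfold vadd, vscal, v0; simpl. intros HXY E. injection E as e1 e2 e3 e4.
  destruct (Req_dec p 0) as [-> | Hp].
  - split; [reflexivity |]. destruct (Req_dec q 0) as [Hq | Hq]; [exact Hq |].
    exfalso. apply HXY. exists 0. right. unfold vscal; simpl.
    f_equal; apply (Rmult_eq_reg_l q); lra.
  - exfalso. apply HXY. exists (- q / p). left. unfold vscal; simpl.
    f_equal; field_simplify_eq; lra.
Qed.

Lemma vscal_lincomb c p q X Y :
  vscal c (vadd (vscal p X) (vscal q Y)) = vadd (vscal (c * p) X) (vscal (c * q) Y).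
Proof. destruct X, Y; unfold vadd, vscal; simpl; f_equal; ring. Qed.

Lemma lincomb_inj X Y p q p' q' :
  ~ par X Y -> vadd (vscal p X) (vscal q Y) = vadd (vscal p' X) (vscal q' Y) ->
  p = p' /\ q = q'.
Proof.
  intros HXY E.
  destruct (not_par_lin_indep X Y (p - p') (q - q') HXY); [| split; lra].
  revert E; destruct X, Y; unfold vadd, vscal, v0; simpl.
  intros E; injection E; intros; f_equal; lra.
Qed.

Lemma par_lincomb_par_R2 X Y p q r s :
  ~ par X Y ->
  par (vadd (vscal p X) (vscal q Y)) (vadd (vscal r X) (vscal s Y)) ->
  par_R2 p q r s.
Proof.
  intros HXY [c [E | E]]; rewrite vscal_lincomb in E;
    apply lincomb_inj in E; trivial; exists c; tauto.
Qed.

Lemma par_R2_par_lincomb X Y p q r s :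
  par_R2 p q r s ->
  par (vadd (vscal p X) (vscal q Y)) (vadd (vscal r X) (vscal s Y)).
Proof.
  intros [c [[-> ->] | [-> ->]]]; exists c; [left | right]; symmetry; apply vscal_lincomb.
Qed.

Lemma par_R2_of_det0 p q r s : p * s - q * r = 0 -> par_R2 p q r s.
Proof.
  intros Hdet. destruct (Req_dec p 0) as [Hp | Hp].
  - destruct (Req_dec q 0) as [Hq | Hq].
    + exists 0. left. split; lra.
    + assert (Hr : r = 0) by (subst p; apply (Rmult_eq_reg_l q); lra).
      exists (s / q). right. split; field_simplify_eq; lra.
  - exists (r / p). right. split; field_simplify_eq; lra.
Qed.

Definition bilin_form (L M N a1 a2 b1 b2 : R) : R :=
  L * a1 * b1 + M * (a1 * b2 + a2 * b1) + N * a2 * b2.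

Lemma bilin_form_sym L M N a1 a2 b1 b2 :
  bilin_form L M N a1 a2 b1 b2 = bilin_form L M N b1 b2 a1 a2.
Proof. unfold bilin_form; ring. Qed.

Lemma bilin_form_scal_l L M N c a1 a2 b1 b2 :
  bilin_form L M N (c * a1) (c * a2) b1 b2 = c * bilin_form L M N a1 a2 b1 b2.
Proof. unfold bilin_form; ring. Qed.

Lemma bilin_form_eq0_par_R2 L M N p q a1 a2 b1 b2 :
  (p <> 0 \/ q <> 0) -> par_R2 p q a1 a2 ->
  bilin_form L M N p q b1 b2 = 0 -> bilin_form L M N a1 a2 b1 b2 = 0.
Proof.
  intros Hpq [c [[-> ->] | [-> ->]]] H0; rewrite bilin_form_scal_l in *.
  - assert (c <> 0) by (intros ->; destruct Hpq; lra).
    apply (Rmult_eq_reg_l c); lra.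
  - rewrite H0; ring.
Qed.

Lemma diffeo2_jacobian_columns D1 D2 a b :
  diffeo2 D1 D2 ->
  (du D1 a b <> 0 \/ du D2 a b <> 0) /\ (dv D1 a b <> 0 \/ dv D2 a b <> 0).
Proof.
  intros (HD1 & HD2 & E1 & E2 & HE1 & HE2 & _ & HED).
  assert (Hu : du (fun x y => E1 (D1 x y) (D2 x y)) a b = 1).
  { unfold du. rewrite (Derive_ext _ (fun t => t)) by (intro; apply HED).
    apply Derive_id. }
  assert (Hv : dv (fun x y => E2 (D1 x y) (D2 x y)) a b = 1).
  { unfold dv. rewrite (Derive_ext _ (fun t => t)) by (intro; apply HED).
    apply Derive_id. }
  rewrite du_comp2 in Hu by assumption. rewrite dv_comp2 in Hv by assumption.
  split; [destruct (Req_dec (du D1 a b) 0), (Req_dec (du D2 a b) 0)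
         | destruct (Req_dec (dv D1 a b) 0), (Req_dec (dv D2 a b) 0)];
    auto; exfalso; nra.
Qed.

Lemma diffeo2_affine u v a1 a2 b1 b2 :
  a1 * b2 - a2 * b1 <> 0 ->
  diffeo2 (fun x y => u + a1 * x + b1 * y) (fun x y => v + a2 * x + b2 * y).
Proof.
  intros Hdet. set (d := a1 * b2 - a2 * b1) in Hdet.
  split; [apply smooth2_affine |]. split; [apply smooth2_affine |].
  exists (fun x y => (b1 * v - b2 * u) / d + (b2 / d) * x + (- b1 / d) * y),
         (fun x y => (a2 * u - a1 * v) / d + (- a2 / d) * x + (a1 / d) * y).
  split; [apply smooth2_affine |]. split; [apply smooth2_affine |].
  split; intros x y; split; unfold d in *; field; exact Hdet.
Qed.

Section VectorReparametrization.

Variables (S : R -> R -> V4) (D1 D2 : R -> R -> R).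
Hypotheses (HS : smoothV S) (HD1 : smooth2 D1) (HD2 : smooth2 D2).

Let Sb a b := S (D1 a b) (D2 a b).

Lemma dU_reparam a b :
  dU Sb a b = vadd (vscal (du D1 a b) (dU S (D1 a b) (D2 a b)))
                   (vscal (du D2 a b) (dV S (D1 a b) (D2 a b))).
Proof.
  destruct HS as (Hs1 & Hs2 & Hs3 & Hs4). unfold dU at 1, vadd, vscal; simpl.
  f_equal; [apply (du_comp2 (fun x y => c1 (S x y)))
           | apply (du_comp2 (fun x y => c2 (S x y)))
           | apply (du_comp2 (fun x y => c3 (S x y)))
           | apply (du_comp2 (fun x y => c4 (S x y)))]; assumption.
Qed.

Lemma dV_reparam a b :
  dV Sb a b = vadd (vscal (dv D1 a b) (dU S (D1 a b) (D2 a b)))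
                   (vscal (dv D2 a b) (dV S (D1 a b) (D2 a b))).
Proof.
  destruct HS as (Hs1 & Hs2 & Hs3 & Hs4). unfold dV at 1, vadd, vscal; simpl.
  f_equal; [apply (dv_comp2 (fun x y => c1 (S x y)))
           | apply (dv_comp2 (fun x y => c2 (S x y)))
           | apply (dv_comp2 (fun x y => c3 (S x y)))
           | apply (dv_comp2 (fun x y => c4 (S x y)))]; assumption.
Qed.

Lemma dV_dU_reparam a b :
  let x := D1 a b in let y := D2 a b in
  dV (dU Sb) a b =
    vadd (vadd (vscal (dv (du D1) a b) (dU S x y)) (vscal (dv (du D2) a b) (dV S x y)))
         (vadd (vadd (vscal (du D1 a b * dv D1 a b) (dU (dU S) x y))
                     (vscal (du D1 a b * dv D2 a b + du D2 a b * dv D1 a b) (dV (dU S) x y)))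
               (vscal (du D2 a b * dv D2 a b) (dV (dV S) x y))).
Proof.
  destruct HS as (Hs1 & Hs2 & Hs3 & Hs4). unfold dV at 1, vadd, vscal; simpl.
  f_equal; [apply (dv_du_comp2 (fun x y => c1 (S x y)))
           | apply (dv_du_comp2 (fun x y => c2 (S x y)))
           | apply (dv_du_comp2 (fun x y => c3 (S x y)))
           | apply (dv_du_comp2 (fun x y => c4 (S x y)))]; assumption.
Qed.

End VectorReparametrization.

Lemma par_refl X : par X X.
Proof. exists 1. left. destruct X; unfold vscal; simpl; f_equal; ring. Qed.

Definition second_form (S N : R -> R -> V4) (u v a1 a2 b1 b2 : R) : R :=
  bilin_form (mink (dU (dU S) u v) (N u v)) (mink (dV (dU S) u v) (N u v))
             (mink (dV (dV S) u v) (N u v)) a1 a2 b1 b2.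

Section Conjugacy.

Variables (S : R -> R -> V4) (P : R -> R -> IsoHyp) (N : R -> R -> V4).
Hypotheses (HS : smoothV S) (HP : tangent_congruence S P)
           (HN : forall u v, normal_to (P u v) (N u v)).

Lemma mink_dV_dU_reparam D1 D2 a b :
  smooth2 D1 -> smooth2 D2 ->
  mink (dV (dU (fun x y => S (D1 x y) (D2 x y))) a b) (N (D1 a b) (D2 a b)) =
  second_form S N (D1 a b) (D2 a b) (du D1 a b) (du D2 a b) (dv D1 a b) (dv D2 a b).
Proof.
  intros HD1 HD2. rewrite dV_dU_reparam by assumption. cbv zeta.
  destruct (proj2 HP (D1 a b) (D2 a b)) as (_ & HSu & HSv).
  apply (normal_to_par_hyp_iff _ _ _ (HN _ _)) in HSu, HSv.
  rewrite !mink_vadd_l, !mink_vscal_l, HSu, HSv.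
  unfold second_form, bilin_form. ring.
Qed.

Lemma L_conjugate_second_form u v a1 a2 b1 b2 :
  ~ par (dU S u v) (dV S u v) ->
  L_conjugate S P u v (vadd (vscal a1 (dU S u v)) (vscal a2 (dV S u v)))
                      (vadd (vscal b1 (dU S u v)) (vscal b2 (dV S u v))) ->
  second_form S N u v a1 a2 b1 b2 = 0.
Proof.
  intros Hreg (D1 & D2 & HD & Hconj). cbv zeta in Hconj.
  destruct Hconj as (a & b & <- & <- & HA & HB & _ & _ & Hsecond).
  destruct (diffeo2_jacobian_columns D1 D2 a b HD) as [Hcol1 Hcol2].
  destruct HD as (HD1 & HD2 & _).
  rewrite dU_reparam in HA by assumption. rewrite dV_reparam in HB by assumption.
  apply (par_lincomb_par_R2 _ _ _ _ _ _ Hreg) in HA, HB.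
  apply (normal_to_par_hyp_iff _ _ _ (HN _ _)) in Hsecond.
  rewrite mink_dV_dU_reparam in Hsecond by assumption.
  unfold second_form in *.
  apply (bilin_form_eq0_par_R2 _ _ _ _ _ _ _ _ _ Hcol1 HA).
  rewrite bilin_form_sym. apply (bilin_form_eq0_par_R2 _ _ _ _ _ _ _ _ _ Hcol2 HB).
  rewrite bilin_form_sym. exact Hsecond.
Qed.

Lemma second_form_L_conjugate u v a1 a2 b1 b2 :
  let A := vadd (vscal a1 (dU S u v)) (vscal a2 (dV S u v)) in
  let B := vadd (vscal b1 (dU S u v)) (vscal b2 (dV S u v)) in
  ~ par A B -> second_form S N u v a1 a2 b1 b2 = 0 -> L_conjugate S P u v A B.
Proof.
  intros A B HAB Hform.
  assert (Hdet : a1 * b2 - a2 * b1 <> 0)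
    by (intro Hdet; apply HAB, par_R2_par_lincomb, par_R2_of_det0, Hdet).
  set (D1 := fun x y => u + a1 * x + b1 * y).
  set (D2 := fun x y => v + a2 * x + b2 * y).
  assert (HD1 : smooth2 D1) by apply smooth2_affine.
  assert (HD2 : smooth2 D2) by apply smooth2_affine.
  assert (E1 : D1 0 0 = u) by (unfold D1; ring).
  assert (E2 : D2 0 0 = v) by (unfold D2; ring).
  assert (J : du D1 0 0 = a1 /\ du D2 0 0 = a2 /\ dv D1 0 0 = b1 /\ dv D2 0 0 = b2)
    by (unfold D1, D2; rewrite !du_affine, !dv_affine; auto).
  destruct J as (J11 & J21 & J12 & J22).
  exists D1, D2. split; [apply diffeo2_affine, Hdet |]. cbv zeta.
  exists 0, 0.
  rewrite (dU_reparam S D1 D2), (dV_reparam S D1 D2), J11, J21, J12, J22, E1, E2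
    by assumption.
  destruct (proj2 HP u v) as (_ & HSu & HSv).
  repeat split; try apply par_refl; try apply par_hyp_lincomb; try assumption.
  rewrite <- E1, <- E2. apply (normal_to_par_hyp_iff _ _ _ (HN _ _)).
  rewrite mink_dV_dU_reparam, J11, J21, J12, J22, E1, E2 by assumption.
  exact Hform.
Qed.

End Conjugacy.

Theorem theorem1 (S : R -> R -> V4) (P : R -> R -> IsoHyp) (N : R -> R -> V4)
  (HS : regular_net S) (HP : tangent_congruence S P)
  (HNs : smoothV N) (HN : forall u v, normal_to (P u v) (N u v))
  (u v a1 a2 b1 b2 : R) :
  let LP := mink (dU (dU S) u v) (N u v) in
  let MP := mink (dV (dU S) u v) (N u v) in
  let NP := mink (dV (dV S) u v) (N u v) in
  let A := vadd (vscal a1 (dU S u v)) (vscal a2 (dV S u v)) in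
  let B := vadd (vscal b1 (dU S u v)) (vscal b2 (dV S u v)) in
  ~ par A B ->
  (L_conjugate S P u v A B <->
   LP * a1 * b1 + MP * (a1 * b2 + a2 * b1) + NP * a2 * b2 = 0).
Proof.
  intros LP MP NP A B HAB. destruct HS as [HSs Hreg].
  change (L_conjugate S P u v A B <-> second_form S N u v a1 a2 b1 b2 = 0).
  split.
  - apply L_conjugate_second_form; auto.
  - apply second_form_L_conjugate; auto.
Qed.
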